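(* Let $S_X,S_Y$ be finite nonempty action sets, $\varphi:S_X\times S_Y\to\mathbb{R}$, $\lambda\in[0,1)$, and let $\tau_X^+,\tau_X^-\in\Delta(S_X)$ satisfy $$\min_{s_Y}\varphi(\tau_X^+,s_Y)\ge(1-\lambda)\max_{s_Y}\varphi(\tau_X^+,s_Y)+\lambda\max_{s_Y}\varphi(\tau_X^-,s_Y),$$ $$\max_{s_Y}\varphi(\tau_X^-,s_Y)\le\lambda\min_{s_Y}\varphi(\tau_X^+,s_Y)+(1-\lambda)\min_{s_Y}\varphi(\tau_X^-,s_Y),$$ (maxima and minima over $s_Y\in S_Y$). Then for every $K\in\big[\max_{s_Y}\varphi(\tau_X^-,s_Y),\ \min_{s_Y}\varphi(\tau_X^+,s_Y)\big]$ there exist $p_0\in[0,1]$ and $p^*:[0,1]\times S_Y\to[0,1]$ such that the reactive learning strategy with initial action $p_0\tau_X^++(1-p_0)\tau_X^-$ and reaction $$\sigma_X^*[p\tau_X^++(1-p)\tau_X^-,s_Y]=p^*[p,s_Y]\tau_X^++(1-p^*[p,s_Y])\tau_X^-$$ enforces $\varphi\equiv K$, i.e., is $(\varphi-K,\lambda)$-autocratic.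
   Context: Two players $X,Y$ play a repeated game with finite action sets $S_X,S_Y$; $\Delta(S)$ denotes the probability distributions on $S$; $\varphi(\tau_X,s_Y)=\mathbb{E}_{s_X\sim\tau_X}[\varphi(s_X,s_Y)]$. Histories: $\mathcal{H}=\bigcup_{T\ge0}(S_X\times S_Y)^T$; behavioral strategies are maps $\sigma:\mathcal{H}\to\Delta(S)$; players independently draw actions each round from their strategies evaluated at the history of realized action pairs, with $\mathbb{E}_{\sigma_X,\sigma_Y}$ the expectation over the resulting play. For a function $f:S_X\times S_Y\to\mathbb{R}$, $\sigma_X$ is $(f,\lambda)$-autocratic if for every behavioral strategy $\sigma_Y$ of $Y$, $\mathbb{E}_{\sigma_X,\sigma_Y}[(1-\lambda)\sum_{t\ge0}\lambda^tf(s_X^t,s_Y^t)]=0$. A reactive learning strategy with initial action $\sigma_X^0\in\Delta(S_X)$ and reaction $\sigma_X^*$ plays $\tau_X^0=\sigma_X^0$ in round $0$ and $\tau_X^{t+1}=\sigma_X^*[\tau_X^t,s_Y^t]$ in round $t+1$, where $s_Y^t$ is $Y$'s realized action in round $t$. *)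

From HB Require Import structures.
From mathcomp Require Import all_boot all_order all_algebra.
From mathcomp Require Import all_classical all_reals all_analysis.
Set Implicit Arguments. Unset Strict Implicit. Unset Printing Implicit Defensive.
Import Order.TTheory GRing.Theory Num.Theory.
Import numFieldNormedType.Exports.
Local Open Scope classical_set_scope.
Local Open Scope ring_scope.

Section RepeatedGame.
Variable R : realType.
Variables SX SY : finType.

Definition is_dist (S : finType) (d : {ffun S -> R}) : Prop :=
  (forall s, 0 <= d s) /\ \sum_(s : S) d s = 1.

Definition phi_mix (phi : SX -> SY -> R) (tau : {ffun SX -> R}) (y : SY) : R :=
  \sum_(x : SX) tau x * phi x y.

(* maximum / minimum of a real function on a (nonempty) finite type;
   default value 0 if the type is empty (never used: S_Y is assumed nonempty) *)
Definition fmax (S : finType) (F : S -> R) : R :=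
  match [pick y : S] with
  | Some y0 => \big[Num.max/F y0]_(y : S) F y
  | None => 0
  end.
Definition fmin (S : finType) (F : S -> R) : R :=
  match [pick y : S] with
  | Some y0 => \big[Num.min/F y0]_(y : S) F y
  | None => 0
  end.

(* histories: finite sequences of realized action pairs (oldest first) *)
Definition hist := seq (SX * SY).

Definition stratX := hist -> {ffun SX -> R}.
Definition stratY := hist -> {ffun SY -> R}.

(* probability that the play starts with the history [pre ++ h], given that
   it starts with [pre] *)
Fixpoint hist_prob (sX : stratX) (sY : stratY) (pre : hist) (h : hist) : R :=
  match h with
  | [::] => 1
  | (x, y) :: h' => sX pre x * sY pre y * hist_prob sX sY (rcons pre (x, y)) h'
  end.

Definition stage_exp (sX : stratX) (sY : stratY) (f : SX -> SY -> R) (t : nat) : R :=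
  \sum_(h : t.-tuple (SX * SY))
     hist_prob sX sY [::] h *
       \sum_(x : SX) \sum_(y : SY) sX h x * sY h y * f x y.

(* sigma_X is (f,lambda)-autocratic: for every behavioral strategy of Y,
   E[(1-lambda) sum_t lambda^t f(s^t)] = 0.  Since f is bounded and
   lambda < 1, the expectation of the discounted sum is the (absolutely
   convergent) series of discounted expected stage payoffs. *)
Definition autocratic (f : SX -> SY -> R) (lam : R) (sX : stratX) : Prop :=
  forall sY : stratY, (forall h, is_dist (sY h)) ->
    series (fun t => (1 - lam) * lam ^+ t * stage_exp sX sY f t) n @[n --> \oo] --> (0 : R).

Definition mixp (tp tm : {ffun SX -> R}) (p : R) : {ffun SX -> R} :=
  [ffun x => p * tp x + (1 - p) * tm x].

Definition react_state (p0 : R) (pstar : R -> SY -> R) (h : hist) : R :=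
  foldl (fun p xy => pstar p xy.2) p0 h.

Definition reactive (tp tm : {ffun SX -> R}) (p0 : R) (pstar : R -> SY -> R) : stratX :=
  fun h => mixp tp tm (react_state p0 pstar h).

End RepeatedGame.

(* Let P be the least payoff of tau+ and Q the largest payoff of tau-, and
   value a weight p on tau+ by p P + (1 - p) Q - K.  The two hypotheses say
   that whatever Y plays, the part of this value that is not paid out in the
   current round, rescaled by 1/lambda, is again the value of a weight in
   [0, 1]; taking that weight as the next state gives a Bellman equation
   value p = (1 - lambda) (payoff - K) + lambda value p*.  Along any play the
   discounted partial sums of expected payoffs therefore telescope to
   value p_0 - lambda^n E[value p_n], which tends to value p_0 = 0 for
   p_0 = (K - Q) / (P - Q). *)

From mathcomp Require Import all_boot all_order all_algebra.
From mathcomp Require Import all_classical all_reals all_analysis.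
From mathcomp Require Import ring lra.
Import Order.TTheory GRing.Theory Num.Theory.
Set Implicit Arguments. Unset Strict Implicit. Unset Printing Implicit Defensive.
Local Open Scope classical_set_scope.
Local Open Scope ring_scope.

Section OneStep.
Variables (R : realFieldType) (lam P Q K : R).

Definition weight_value (p : R) : R := p * P + (1 - p) * Q - K.

Lemma weight_value_norm_le p : 0 <= p <= 1 -> `|weight_value p| <= `|P| + `|Q| + `|K|.
Proof.
move=> /andP[p_ge0 p_le1]; apply: le_trans (ler_normB _ _) _; rewrite lerD2r.
apply: le_trans (ler_normD _ _) _.
rewrite !normrM (ger0_norm p_ge0) (@ger0_norm _ (1 - p)) ?subr_ge0 //.
by apply: lerD; rewrite ler_piMl ?normr_ge0 //; lra.
Qed.

(* The weight [p*] with [weight_value p = (1 - lam) * (u - K) + lam * weight_value p*]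
   for the stage payoff [u].  The guard only fires when [lam = 0] or [P = Q]:
   the division is then by zero, and any weight solves the equation. *)
Definition next_weight (p u : R) : R :=
  let v := ((p * P + (1 - p) * Q - (1 - lam) * u) / lam - Q) / (P - Q) in
  if 0 <= v <= 1 then v else 0.

Lemma next_weight_range p u : 0 <= next_weight p u <= 1.
Proof. by rewrite /next_weight; case: ifP => // _; rewrite lexx ler01. Qed.

Definition initial_weight : R := (K - Q) / (P - Q).

Lemma initial_weight_range : Q <= K <= P -> 0 <= initial_weight <= 1.
Proof.
move=> /andP[QK KP]; rewrite /initial_weight.
have [ePQ|nPQ] := eqVneq P Q; first by rewrite ePQ subrr invr0 mulr0 lexx ler01.
have PQ : 0 < P - Q by rewrite subr_gt0 lt_def nPQ; lra.
by rewrite divr_ge0 ?ler_pdivrMr ?mul1r //=; lra.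
Qed.

Lemma weight_value_initial : Q <= K <= P -> weight_value initial_weight = 0.
Proof.
move=> /andP[QK KP]; rewrite /weight_value /initial_weight.
have [ePQ|nPQ] := eqVneq P Q; first by rewrite ePQ subrr invr0 mulr0; lra.
by field; rewrite subr_eq0.
Qed.

Lemma continuation_range Amax Bmin p a b :
  0 <= lam < 1 -> (1 - lam) * Amax + lam * Q <= P -> Q <= lam * P + (1 - lam) * Bmin ->
  0 <= p <= 1 -> P <= a <= Amax -> Bmin <= b <= Q ->
  lam * Q <= p * P + (1 - p) * Q - (1 - lam) * (p * a + (1 - p) * b) <= lam * P.
Proof.
move=> /andP[lam_ge0 lam_lt1] H1 H2 /andP[p0 p1] /andP[Pa aA] /andP[Bb bQ].
have -> : p * P + (1 - p) * Q - (1 - lam) * (p * a + (1 - p) * b)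
    = p * (P - (1 - lam) * a) + (1 - p) * (Q - (1 - lam) * b) by ring.
have a_lo : lam * Q <= P - (1 - lam) * a by nra.
have a_hi : P - (1 - lam) * a <= lam * P by nra.
have b_lo : lam * Q <= Q - (1 - lam) * b by nra.
have b_hi : Q - (1 - lam) * b <= lam * P by nra.
apply/andP; split; nra.
Qed.

Lemma weight_value_step Amax Bmin p a b :
  0 <= lam < 1 -> (1 - lam) * Amax + lam * Q <= P -> Q <= lam * P + (1 - lam) * Bmin ->
  Q <= K <= P -> 0 <= p <= 1 -> P <= a <= Amax -> Bmin <= b <= Q ->
  let u := p * a + (1 - p) * b in
  weight_value p = (1 - lam) * (u - K) + lam * weight_value (next_weight p u).
Proof.
move=> lam_lt H1 H2 /andP[QK KP] p_range a_range b_range u.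
have /andP[w_ge w_le] := continuation_range lam_lt H1 H2 p_range a_range b_range.
case/andP: lam_lt p_range a_range b_range.
move=> lam_ge0 lam_lt1 /andP[p0 p1] /andP[Pa aA] /andP[Bb bQ].
have [lam0|lam_neq0] := eqVneq lam 0.
  rewrite /u; have [-> ->] : a = P /\ b = Q by split; nra.
  by rewrite /weight_value lam0 mul0r addr0 subr0 mul1r.
have [ePQ|nPQ] := eqVneq P Q.
  rewrite /u /weight_value; have [-> -> ->] : [/\ a = P, b = Q & K = P] by split; nra.
  by rewrite -ePQ; ring.
have lam_gt0 : 0 < lam by rewrite lt_def lam_neq0.
have PQ : 0 < P - Q by rewrite subr_gt0 lt_def nPQ; lra.
set w := p * P + (1 - p) * Q - (1 - lam) * u.
set v := (w / lam - Q) / (P - Q).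
have ev : v * (P - Q) = w / lam - Q by rewrite /v mulfVK // gt_eqF.
have wQ : Q <= w / lam by rewrite ler_pdivlMr // mulrC.
have wP : w / lam <= P by rewrite ler_pdivrMr // mulrC.
have v_ge0 : 0 <= v by nra.
have v_le1 : v <= 1 by nra.
rewrite /next_weight -/w -/v v_ge0 v_le1 /weight_value.
have -> : v * P + (1 - v) * Q = v * (P - Q) + Q by ring.
by rewrite ev /w; field.
Qed.

End OneStep.

Section Play.
Variables (R : realType) (SX SY : finType).
Variables (sX : stratX R SX SY) (sY : stratY R SX SY).

Definition round_exp (h : hist SX SY) (f : SX -> SY -> R) : R :=
  \sum_x \sum_y sX h x * sY h y * f x y.

Definition hist_exp (pre : hist SX SY) (t : nat) (F : hist SX SY -> R) : R :=
  \sum_(h : t.-tuple (SX * SY)) hist_prob sX sY pre h * F (pre ++ h).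

Lemma round_expE h f : round_exp h f = \sum_y sY h y * phi_mix f (sX h) y.
Proof.
rewrite /round_exp exchange_big; apply: eq_bigr => y _ /=.
by rewrite /phi_mix big_distrr; apply: eq_bigr => x _ /=; ring.
Qed.

Lemma round_expZ h c f : round_exp h (fun x y => c * f x y) = c * round_exp h f.
Proof.
rewrite /round_exp big_distrr; apply: eq_bigr => x _ /=.
by rewrite big_distrr; apply: eq_bigr => y _ /=; ring.
Qed.

Lemma round_expB h f g :
  round_exp h (fun x y => f x y - g x y) = round_exp h f - round_exp h g.
Proof.
rewrite /round_exp -sumrB; apply: eq_bigr => x _ /=.
by rewrite -sumrB; apply: eq_bigr => y _ /=; rewrite mulrBr.
Qed.

Lemma round_exp_sum h n (F : 'I_n -> SX -> SY -> R) :
  round_exp h (fun x y => \sum_(i < n) F i x y) = \sum_(i < n) round_exp h (F i).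
Proof.
rewrite /round_exp [RHS]exchange_big; apply: eq_bigr => x _ /=.
by rewrite [RHS]exchange_big; apply: eq_bigr => y _ /=; rewrite big_distrr.
Qed.

Lemma hist_exp0 pre F : hist_exp pre 0 F = F pre.
Proof.
rewrite /hist_exp (big_pred1 [tuple]) /=; first by rewrite cats0 mul1r.
by move=> h; apply/esym/eqP/val_inj; case: h => [[]].
Qed.

Lemma hist_expS pre t F :
  hist_exp pre t.+1 F =
  round_exp pre (fun x y => hist_exp (rcons pre (x, y)) t F).
Proof.
rewrite /hist_exp /round_exp.
rewrite (reindex (fun p : (SX * SY) * t.-tuple (SX * SY) => [tuple of p.1 :: p.2])); last first.
  exists (fun u : t.+1.-tuple (SX * SY) => (thead u, [tuple of behead u])).
    by move=> [z h] _ /=; rewrite theadE; congr pair; apply: val_inj.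
  by move=> u _ /=; rewrite -tuple_eta.
rewrite -(pair_bigA _ (fun (z : SX * SY) (h : t.-tuple (SX * SY)) =>
   hist_prob sX sY pre [tuple of z :: h] * F (pre ++ [tuple of z :: h]))) /=.
rewrite (pair_big _ _ (fun x y => sX pre x * sY pre y * _)) /=.
apply: eq_bigr => -[x y] _.
rewrite big_distrr /=; apply: eq_bigr => h _.
by rewrite -cat_rcons mulrA.
Qed.

Hypotheses (sX_dist : forall h, is_dist (sX h)) (sY_dist : forall h, is_dist (sY h)).

Lemma round_exp_norm_le h f C :
  (forall x y, `|f x y| <= C) -> `|round_exp h f| <= C.
Proof.
move=> f_le; have [sX_ge0 sX_sum1] := sX_dist h; have [sY_ge0 sY_sum1] := sY_dist h.
have -> : C = round_exp h (fun _ _ => C).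
  rewrite /round_exp; under eq_bigr do rewrite -big_distrl -big_distrr /= sY_sum1 mulr1.
  by rewrite -big_distrl /= sX_sum1 mul1r.
apply: le_trans (ler_norm_sum _ _ _) _; apply: ler_sum => x _.
apply: le_trans (ler_norm_sum _ _ _) _; apply: ler_sum => y _.
by rewrite normrM ger0_norm ?mulr_ge0 // ler_wpM2l ?mulr_ge0.
Qed.

Lemma hist_exp_norm_le F C :
  (forall h, `|F h| <= C) -> forall n pre, `|hist_exp pre n F| <= C.
Proof.
move=> F_le; elim=> [|n IH] pre; first by rewrite hist_exp0.
by rewrite hist_expS; apply: round_exp_norm_le.
Qed.

Section Telescope.
Variables (f : SX -> SY -> R) (W : hist SX SY -> R) (lam : R).
Hypothesis W_bellman : forall h,
  W h = (1 - lam) * round_exp h f + lam * round_exp h (fun x y => W (rcons h (x, y))).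

Lemma discounted_sum_telescope n pre :
  \sum_(t < n) (1 - lam) * lam ^+ t * hist_exp pre t (round_exp^~ f)
  = W pre - lam ^+ n * hist_exp pre n W.
Proof.
elim: n pre => [|n IH] pre; first by rewrite big_ord0 hist_exp0 expr0 mul1r subrr.
have shift : \sum_(i < n) (1 - lam) * lam ^+ i.+1 * hist_exp pre i.+1 (round_exp^~ f)
    = lam * round_exp pre (fun x y => \sum_(i < n) (1 - lam) * lam ^+ i *
                                       hist_exp (rcons pre (x, y)) i (round_exp^~ f)).
  rewrite round_exp_sum big_distrr; apply: eq_bigr => i _ /=.
  rewrite hist_expS -!round_expZ; congr round_exp.
  by apply/funext => x; apply/funext => y; rewrite exprS; ring.
rewrite big_ord_recl expr0 mulr1 hist_exp0 /bump /=.
rewrite shift.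
have -> : (fun x y => \sum_(i < n) (1 - lam) * lam ^+ i *
                        hist_exp (rcons pre (x, y)) i (round_exp^~ f))
    = (fun x y => W (rcons pre (x, y)) - lam ^+ n * hist_exp (rcons pre (x, y)) n W).
  by apply/funext => x; apply/funext => y; exact: IH.
by rewrite round_expB round_expZ W_bellman hist_expS exprS; ring.
Qed.

Lemma discounted_series_cvg0 C : 0 <= lam < 1 ->
  (forall h, `|W h| <= C) -> W [::] = 0 ->
  series (fun t => (1 - lam) * lam ^+ t * stage_exp sX sY f t) n @[n --> \oo] --> 0.
Proof.
move=> /andP[lam_ge0 lam_lt1] W_le W_nil.
have -> : series (fun t => (1 - lam) * lam ^+ t * stage_exp sX sY f t)
    = (fun n => - (lam ^+ n * hist_exp [::] n W)).
  apply/funext => n; have := discounted_sum_telescope n [::].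
  by rewrite W_nil sub0r seriesEord => <-.
have geom : C * lam ^+ n @[n --> \oo] --> 0.
  by rewrite -(mulr0 C); apply: cvgMl_tmp; apply: cvg_expr; rewrite ger0_norm.
apply: (@squeeze_cvgr _ _ _ _ (fun n => - (C * lam ^+ n)) (fun n => C * lam ^+ n)).
- apply: nearW => n; rewrite -ler_norml normrN normrM ger0_norm ?exprn_ge0 // mulrC.
  by rewrite ler_wpM2r ?exprn_ge0 ?hist_exp_norm_le.
- by rewrite -oppr0; apply: cvgN.
- exact: geom.
Qed.

End Telescope.
End Play.

Lemma fmin_le (R : realType) (S : finType) (F : S -> R) y : fmin F <= F y.
Proof. by rewrite /fmin; case: pickP => [y0 _|/(_ y)//]; apply: bigmin_le. Qed.

Lemma fmax_ge (R : realType) (S : finType) (F : S -> R) y : F y <= fmax F.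
Proof. by rewrite /fmax; case: pickP => [y0 _|/(_ y)//]; apply: le_bigmax. Qed.

Section Mixtures.
Variables (R : realType) (SX SY : finType).

Lemma phi_mix_mixp (f : SX -> SY -> R) tp tm p y :
  phi_mix f (mixp tp tm p) y = p * phi_mix f tp y + (1 - p) * phi_mix f tm y.
Proof.
rewrite /phi_mix !big_distrr -big_split; apply: eq_bigr => x _ /=.
by rewrite ffunE; ring.
Qed.

Lemma phi_mix_const (g : SY -> R) (tau : {ffun SX -> R}) y :
  is_dist tau -> phi_mix (fun _ y => g y) tau y = g y.
Proof. by move=> [_ tau_sum1]; rewrite /phi_mix -big_distrl /= tau_sum1 mul1r. Qed.

Lemma phi_mixBr (f : SX -> SY -> R) K tau y :
  is_dist tau -> phi_mix (fun x y => f x y - K) tau y = phi_mix f tau y - K.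
Proof.
move=> [_ tau_sum1]; rewrite /phi_mix; under eq_bigr do rewrite mulrBr.
by rewrite sumrB -big_distrl /= tau_sum1 mul1r.
Qed.

Lemma mixp_dist (tp tm : {ffun SX -> R}) p :
  is_dist tp -> is_dist tm -> 0 <= p <= 1 -> is_dist (mixp tp tm p).
Proof.
move=> [tp_ge0 tp_sum1] [tm_ge0 tm_sum1] /andP[p_ge0 p_le1]; split.
  by move=> x; rewrite ffunE addr_ge0 ?mulr_ge0 ?subr_ge0.
under eq_bigr do rewrite ffunE.
by rewrite big_split /= -!big_distrr /= tp_sum1 tm_sum1 !mulr1 addrC subrK.
Qed.

End Mixtures.

Section Reactive.
Variables (R : realType) (SX SY : finType) (tp tm : {ffun SX -> R}).
Variables (p0 : R) (pstar : R -> SY -> R).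
Hypotheses (p0_range : 0 <= p0 <= 1)
  (pstar_range : forall p y, 0 <= p <= 1 -> 0 <= pstar p y <= 1).

Lemma react_state_range (h : hist SX SY) : 0 <= react_state p0 pstar h <= 1.
Proof. by rewrite /react_state; elim: h p0 p0_range => [|xy h IH] p //= /pstar_range/IH. Qed.

Lemma react_state_rcons (h : hist SX SY) xy :
  react_state p0 pstar (rcons h xy) = pstar (react_state p0 pstar h) xy.2.
Proof. exact: foldl_rcons. Qed.

Hypotheses (tp_dist : is_dist tp) (tm_dist : is_dist tm).

Lemma reactive_dist h : is_dist (reactive tp tm p0 pstar h).
Proof. exact/mixp_dist/react_state_range. Qed.

Lemma reactive_bellman (f : SX -> SY -> R) lam (V : R -> R) (sY : stratY R SX SY) :
  (forall h, is_dist (sY h)) ->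
  (forall p y, 0 <= p <= 1 ->
     V p = (1 - lam) * phi_mix f (mixp tp tm p) y + lam * V (pstar p y)) ->
  let sX := reactive tp tm p0 pstar in
  let W h := V (react_state p0 pstar h) in
  forall h, W h = (1 - lam) * round_exp sX sY h f
                  + lam * round_exp sX sY h (fun x y => W (rcons h (x, y))).
Proof.
move=> sY_dist V_step sX W h; have [_ sY_sum1] := sY_dist h.
set p := react_state p0 pstar h.
have W_next y : phi_mix (fun x y => W (rcons h (x, y))) (sX h) y = V (pstar p y).
  rewrite -[RHS](phi_mix_const (fun y => V (pstar p y)) y (reactive_dist h)).
  by apply: eq_bigr => x _; rewrite /W react_state_rcons.
rewrite !round_expE; change (sX h) with (mixp tp tm p).
under [X in _ = _ + _ * X]eq_bigr do rewrite W_next.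
have -> : W h = \sum_y sY h y * V p by rewrite -big_distrl /= sY_sum1 mul1r.
rewrite !big_distrr -big_split /=; apply: eq_bigr => y _.
by rewrite (V_step p y (react_state_range h)); ring.
Qed.

End Reactive.

Theorem lemma2 (R : realType) (SX SY : finType)
  (hSX : (0 < #|SX|)%N) (hSY : (0 < #|SY|)%N)
  (phi : SX -> SY -> R) (lam : R) (hlam0 : 0 <= lam) (hlam1 : lam < 1)
  (tp tm : {ffun SX -> R}) (htp : is_dist tp) (htm : is_dist tm)
  (H1 : fmin (phi_mix phi tp)
        >= (1 - lam) * fmax (phi_mix phi tp) + lam * fmax (phi_mix phi tm))
  (H2 : fmax (phi_mix phi tm)
        <= lam * fmin (phi_mix phi tp) + (1 - lam) * fmin (phi_mix phi tm))
  (K : R) (hK1 : fmax (phi_mix phi tm) <= K) (hK2 : K <= fmin (phi_mix phi tp)) :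
  exists (p0 : R) (pstar : R -> SY -> R),
    [/\ 0 <= p0 <= 1,
        (forall p y, 0 <= p <= 1 -> 0 <= pstar p y <= 1) &
        autocratic (fun x y => phi x y - K) lam (reactive tp tm p0 pstar)].
Proof.
set a := phi_mix phi tp in H1 H2 hK2 *; set b := phi_mix phi tm in H1 H2 hK1 *.
set P := fmin a in H1 H2 hK2 *; set Q := fmax b in H1 H2 hK1 *.
have QKP : Q <= K <= P by rewrite hK1 hK2.
have lam_range : 0 <= lam < 1 by rewrite hlam0 hlam1.
pose pstar p y := next_weight lam P Q p (p * a y + (1 - p) * b y).
pose p0 := initial_weight P Q K.
have p0_range : 0 <= p0 <= 1 := initial_weight_range QKP.
have pstar_range p y : 0 <= p <= 1 -> 0 <= pstar p y <= 1 by move=> _; apply: next_weight_range.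
have step p y : 0 <= p <= 1 -> weight_value P Q K p =
    (1 - lam) * phi_mix (fun x y => phi x y - K) (mixp tp tm p) y
    + lam * weight_value P Q K (pstar p y).
  move=> p_range; rewrite phi_mixBr; last exact: mixp_dist.
  rewrite phi_mix_mixp -/a -/b.
  by apply: (weight_value_step (Amax := fmax a) (Bmin := fmin b)) => //; rewrite fmin_le fmax_ge.
exists p0, pstar; split => // sY sY_dist.
apply: (discounted_series_cvg0 (reactive_dist p0_range pstar_range htp htm) sY_dist
         (reactive_bellman p0_range pstar_range htp htm sY_dist step) lam_range).
- by move=> h; apply: weight_value_norm_le; apply: react_state_range.
- exact: weight_value_initial.
Qed.
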